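(* Let $\Lambda\subseteq\mathbb{R}^d$ be a $d$-dimensional lattice, $F\colon K\to\mathbb{R}$ a $\Lambda$-periodic filter on a $\Lambda$-periodic cell complex $K$, and $\mathcal{M}=\mathcal{M}(F,\Lambda)$ its periodic merge tree with frequency function $\Phi$. If a point $B\in\mathcal{M}$ covers another point $A\in\mathcal{M}$, then $\Phi(B)\le\Phi(A)$.
   Context: A cell complex $K$ in $\mathbb{R}^d$ is a locally finite collection of cells (each homeomorphic to a closed ball, boundaries unions of lower-dimensional cells, intersections unions of shared faces). A lattice spanned by linearly independent vectors is the set of their integer combinations; $\mathrm{vol}_p$ is the $p$-volume of its unit cell $\{\sum c_iu_i: c_i\in[0,1)\}$ ($\mathrm{vol}_0(\{0\})=1$). $K$ is $\Lambda$-periodic if $\sigma+u\in K$ for $u\in\Lambda$; a filter $F$ satisfies $F(\sigma)\le F(\tau)$ for faces $\sigma$ of $\tau$ and is $\Lambda$-periodic if $F(\sigma+u)=F(\sigma)$; $K/\Lambda$ is the finite quotient complex on the torus $\mathbb{R}^d/\Lambda$, $F/\Lambda$ the quotient filter. The periodic merge tree $\mathcal{M}(F,\Lambda)$ is the merge tree of $F/\Lambda$: the quotient of $\{(x,s): x\in(K/\Lambda)_s\}$ ($(K/\Lambda)_s=(F/\Lambda)^{-1}(-\infty,s]$) by $(x,s)\sim(y,t)$ iff $s=t$ and $x,y$ are in the same connected component of $(K/\Lambda)_s$, with quotient topology and height $h$ (the $s$-coordinate); points are identified with components of sublevel sets, and $B$ covers $A$ if $h(A)\le h(B)$ and $A\subseteq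 B$. For a component $\Gamma$, with $\phi\colon\mathbb{R}^d\to\mathbb{R}^d/\Lambda$ the projection, a shadow is a component of $\phi^{-1}(\Gamma)$, the periodicity lattice is $\Lambda_\Gamma=\{u\in\Lambda:\gamma+u=\gamma\}$ for some (equivalently every) shadow $\gamma$, $p=\dim\Lambda_\Gamma$, and the frequency function is $\Phi(\Gamma)=\frac{\mathrm{vol}_p(\Lambda_\Gamma)}{\mathrm{vol}_d(\Lambda)}\nu_{d-p}R^{d-p}$ ($\nu_q$ the volume of the unit $q$-ball). Monomials are ordered by $tR^a<sR^b$ iff $a<b$, or $a=b$ and $t<s$; $\le$ allows equality. *)

From HB Require Import structures.
From mathcomp Require Import all_boot all_order all_algebra generic_quotient.
From mathcomp Require Import all_classical all_reals.
From mathcomp Require Import all_analysis.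

Set Implicit Arguments.
Unset Strict Implicit.
Unset Printing Implicit Defensive.

Import Order.TTheory GRing.Theory Num.Theory.
Import numFieldNormedType.Exports.
Local Open Scope classical_set_scope.
Local Open Scope ring_scope.

Section PeriodicMergeTrees.
Variable R : realType.

Definition latt (p d : nat) (M : 'M[R]_(p, d)) : set 'rV[R]_d :=
  [set x | exists z : 'rV[int]_p, x = map_mx (fun k : int => k%:~R) z *m M].

(* p-volume of the unit cell of the lattice spanned by the (linearly
   independent) rows of M : sqrt of the Gram determinant; equals 1 for p = 0. *)
Definition latt_vol (p d : nat) (M : 'M[R]_(p, d)) : R :=
  Num.sqrt (\det (M *m M^T)).

Definition is_latt_dim_vol (d : nat) (L : set 'rV[R]_d) (pv : nat * R) : Prop :=
  exists M : 'M[R]_(pv.1, d), [/\ row_free M, L = latt M & pv.2 = latt_vol M].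

(* dimension and volume of a lattice (chosen; independent of the basis) *)
Definition latt_dim_vol (d : nat) (L : set 'rV[R]_d) : nat * R :=
  xget (0%N, 0) (is_latt_dim_vol L).

Section Torus.
Variables (d : nat) (Bm : 'M[R]_d).

Definition latt_rel (x y : 'rV[R]_d) : bool := `[< latt Bm (x - y) >].

Lemma latt_rel_refl : reflexive latt_rel.
Proof.
move=> x; apply/asboolP; exists 0; by rewrite subrr map_mx0 mul0mx.
Qed.

Lemma latt_rel_sym : symmetric latt_rel.
Proof.
suff H : forall x y, latt_rel x y -> latt_rel y x.
  by move=> x y; apply/idP/idP; apply: H.
move=> x y /asboolP [z Hz]; apply/asboolP; exists (- z).
by rewrite map_mxN mulNmx -Hz opprB.
Qed.

Lemma latt_rel_trans : transitive latt_rel.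
Proof.
move=> y x z /asboolP [a Ha] /asboolP [b Hb]; apply/asboolP; exists (a + b).
by rewrite map_mxD mulmxDl -Ha -Hb addrA subrK.
Qed.

Definition latt_equiv := EquivRel _ latt_rel_refl latt_rel_sym latt_rel_trans.

Local Open Scope quotient_scope.
Definition torus := {eq_quot latt_equiv}.
HB.instance Definition _ := Topological.copy torus (quotient_topology torus).
HB.instance Definition _ := Quotient.on torus.

Definition proj_torus : 'rV[R]_d -> torus := \pi_torus.

End Torus.

Definition enorm (k : nat) (x : 'rV[R]_k) : R := Num.sqrt (\sum_i x 0 i ^+ 2).
Definition cball (k : nat) : set 'rV[R]_k := [set x | enorm x <= 1].
Definition csphere (k : nat) : set 'rV[R]_k := [set x | enorm x = 1].
Arguments cball : clear implicits.
Arguments csphere : clear implicits.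

Definition ball_homeo (k d : nat) (f : 'rV[R]_k -> 'rV[R]_d) (sigma : set 'rV[R]_d) :=
  exists g : 'rV[R]_d -> 'rV[R]_k,
    [/\ {within cball k, continuous f}, {within sigma, continuous g},
        f @` cball k = sigma,
        (forall x, cball k x -> g (f x) = x) & (forall y, sigma y -> f (g y) = y)].

Definition is_cell (d k : nat) (sigma : set 'rV[R]_d) :=
  exists f : 'rV[R]_k -> 'rV[R]_d, ball_homeo f sigma.

Definition translate (d : nat) (u : 'rV[R]_d) (A : set 'rV[R]_d) :=
  [set x + u | x in A].

Definition cell_complex (d : nat) (K : set (set 'rV[R]_d)) : Prop :=
  [/\
      (forall sigma, K sigma -> exists (k : nat) (f : 'rV[R]_k -> 'rV[R]_d),
          ball_homeo f sigma /\
          f @` csphere k = \bigcup_(tau in [set tau | K tau /\ tau `<=` f @` csphere k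
                                      /\ exists2 j, (j < k)%N & is_cell j tau]) tau),
      (forall sigma tau, K sigma -> K tau ->
          sigma `&` tau = \bigcup_(rho in [set rho | K rho /\ rho `<=` sigma /\ rho `<=` tau]) rho)
    &
      (forall x : 'rV[R]_d, exists2 U, nbhs x U &
          finite_set [set sigma | K sigma /\ sigma `&` U !=set0])].

Definition periodic_complex (d : nat) (Bm : 'M[R]_d) (K : set (set 'rV[R]_d)) :=
  forall sigma u, K sigma -> latt Bm u -> K (translate u sigma).

Definition is_filter (d : nat) (K : set (set 'rV[R]_d)) (F : set 'rV[R]_d -> R) :=
  forall sigma tau, K sigma -> K tau -> sigma `<=` tau -> F sigma <= F tau.

Definition periodic_filter (d : nat) (Bm : 'M[R]_d) (K : set (set 'rV[R]_d))
    (F : set 'rV[R]_d -> R) :=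
  forall sigma u, K sigma -> latt Bm u -> F (translate u sigma) = F sigma.

(* (K/Lambda)_s, as a subset of the torus : image of the cells with F <= s *)
Definition torus_sublevel (d : nat) (Bm : 'M[R]_d) (K : set (set 'rV[R]_d))
    (F : set 'rV[R]_d -> R) (s : R) : set (torus Bm) :=
  proj_torus Bm @` \bigcup_(sigma in [set sigma | K sigma /\ F sigma <= s]) sigma.

Definition is_component {T : topologicalType} (S G : set T) :=
  exists2 x, S x & G = connected_component S x.

Definition is_shadow (d : nat) (Bm : 'M[R]_d) (Gam : set (torus Bm))
    (gam : set 'rV[R]_d) := is_component (proj_torus Bm @^-1` Gam) gam.

Definition period_latt (d : nat) (Bm : 'M[R]_d) (gam : set 'rV[R]_d) :=
  [set u | latt Bm u /\ translate u gam = gam].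

(* volume of the unit q-ball *)
Fixpoint nu (q : nat) : R :=
  match q with
  | 0%N => 1
  | 1%N => 2
  | (q'.+2)%N => (2 * pi) / (q'.+2)%:R * nu q'
  end.

(* monomials t R^a are encoded as pairs (a, t) *)
Definition mono_le (m1 m2 : nat * R) : Prop :=
  (m1.1 < m2.1)%N \/ (m1.1 = m2.1 /\ m1.2 <= m2.2).

Definition freq (d : nat) (Bm : 'M[R]_d) (Gam : set (torus Bm)) : nat * R :=
  let gam := xget set0 (is_shadow Gam) in
  let pv := latt_dim_vol (period_latt Bm gam) in
  ((d - pv.1)%N, pv.2 / latt_vol Bm * nu (d - pv.1)).

End PeriodicMergeTrees.

Arguments torus_sublevel {R d} Bm K F s.
Arguments freq {R d Bm} Gam.

From HB Require Import structures.
From mathcomp Require Import all_boot all_order all_algebra generic_quotient.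
From mathcomp Require Import all_classical all_reals all_analysis.
From mathcomp Require Import zify.
Import Order.TTheory GRing.Theory Num.Theory.
Import numFieldNormedType.Exports.
Local Open Scope classical_set_scope.
Local Open Scope ring_scope.
Set Implicit Arguments.
Unset Strict Implicit.
Unset Printing Implicit Defensive.

(* Lifting to R^d, the shadows of a component B of a sublevel set of the torus are the
   connected components of its preimage.  Sublevel sets of a locally finite complex have
   open components and B is connected, so any two shadows of B differ by a lattice vector;
   hence the periodicity lattice of B does not depend on the chosen shadow.  If A is
   contained in B, a shadow of A lies in a shadow of B, so the periodicity lattice of A is
   a subgroup of that of B.  A subgroup of a lattice is a lattice of no larger rank, and at
   equal rank its unit cell is |det Z| >= 1 times larger, Z being an integer
   change-of-basis matrix: this is the monomial order on the frequencies. *)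

Section AdditiveSubgroups.
Variable V : zmodType.
Implicit Types (H : set V) (u v : V).

Definition subgroup_set H := H 0 /\ forall u v, H u -> H v -> H (u - v).

Lemma subgroupN H u : subgroup_set H -> H u -> H (- u).
Proof. by move=> [H0 HB] Hu; rewrite -sub0r; apply: HB. Qed.

Lemma subgroupD H u v : subgroup_set H -> H u -> H v -> H (u + v).
Proof. by move=> sH Hu Hv; rewrite -[v]opprK; apply: sH.2 => //; apply: subgroupN. Qed.

Lemma subgroupMz H u (q : int) : subgroup_set H -> H u -> H (u *~ q).
Proof.
move=> sH Hu; have Hn (n : nat) : H (u *+ n).
  by elim: n => [|n IH]; [rewrite mulr0n; case: sH | rewrite mulrS; apply: subgroupD].
by case: q => n; [exact: Hn | rewrite NegzE mulrNz; exact: subgroupN (Hn _)].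
Qed.

Lemma subgroupI H1 H2 : subgroup_set H1 -> subgroup_set H2 -> subgroup_set (H1 `&` H2).
Proof.
move=> [H10 H1B] [H20 H2B]; split => // u v [? ?] [? ?].
by split; [apply: H1B | apply: H2B].
Qed.

End AdditiveSubgroups.

Lemma subgroup_int_dvd (S : set int) : subgroup_set S ->
  S = [set 0] \/ exists2 k : nat, (0 < k)%N & S = [set q | (k %| q)%Z].
Proof.
move=> sS; have [S0|] := pselect (forall q, S q -> q = 0).
  by left; apply/seteqP; split => [q /S0 //|q ->]; case: sS.
move=> /existsNP[q /not_implyP[Sq /eqP q0]].
have Sabs : exists k : nat, (0 < k)%N && `[< S k >].
  exists `|q|%N; rewrite absz_gt0 q0; apply/asboolP.
  case: (ltrP 0 q) => q_sign; first by rewrite gez0_abs ?ltW.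
  by rewrite lez0_abs //; apply: subgroupN.
case: (ex_minnP Sabs) => k /andP[k_gt0 /asboolP Sk] k_min.
right; exists k => //; apply/seteqP; split => [r Sr|r /dvdzP[c ->]]; last first.
  by rewrite mulrC -mulrzz; apply: subgroupMz.
have Smod : S (r %% k)%Z.
  have -> : (r %% k)%Z = r - k%:Z *~ (r %/ k)%Z.
    by rewrite mulrzz mulrC {2}(divz_eq r k) addrAC subrr add0r.
  by apply: sS.2 => //; apply: subgroupMz.
apply/dvdz_mod0P/eqP/negPn/negP => rk0.
have rk_ge0 : 0 <= (r %% k)%Z by rewrite modz_ge0 // eqz_nat -lt0n.
have := k_min `|(r %% k)%Z|%N; rewrite absz_gt0 rk0 gez0_abs //.
move=> /(_ (asboolT Smod)); rewrite leqNgt -ltz_nat gez0_abs //.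
by rewrite ltz_pmod ?ltz_nat.
Qed.

Section RowFreeColMx.
Variables (F : fieldType) (m n : nat) (b : 'rV[F]_n) (C : 'M[F]_(m, n)).

Lemma row_free_col_mx_eq0 (c : F) (v : 'rV[F]_m) :
  row_free (col_mx b C) -> c *: b + v *m C = 0 -> c = 0 /\ v = 0.
Proof.
move=> bC_free cbvC0.
have : row_mx c%:M v *m col_mx b C == 0 by rewrite mul_row_col mul_scalar_mx cbvC0.
rewrite mulmx_free_eq0 // row_mx_eq0 => /andP[/eqP/matrixP/(_ 0 0) + /eqP ->].
by rewrite !mxE mulr1n.
Qed.

Lemma row_free_col_mxd : row_free (col_mx b C) -> row_free C.
Proof.
move=> bC_free; apply: inj_row_free => v vC0.
by have [] := @row_free_col_mx_eq0 0 v bC_free; rewrite ?scale0r ?add0r.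
Qed.

Lemma row_free_col_mx_shear p (h : 'rV[F]_n) (M : 'M[F]_(p, n)) (a : F) :
  row_free (col_mx b C) -> row_free M -> (M <= C)%MS ->
  (h - a *: b <= C)%MS -> a != 0 -> row_free (col_mx h M).
Proof.
move=> bC_free M_free /submxP[W MWC] /submxP[z hE] a0.
have hbz : h = a *: b + z *m C by rewrite -hE addrC subrK.
apply: inj_row_free => v; rewrite -[v]hsubmxK mul_row_col [lsubmx v]mx11_scalar.
set c := lsubmx v 0 0; set v' := rsubmx v.
rewrite mul_scalar_mx => vM0.
have : (c * a) *: b + (c *: z + v' *m W) *m C = 0.
  by rewrite -vM0 hbz MWC mulmxDl -scalemxAl -mulmxA scalerDr scalerA addrA.
move=> /row_free_col_mx_eq0 -/(_ bC_free) [/eqP].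
rewrite mulf_eq0 (negPf a0) orbF => /eqP c0 _.
have /eqP : v' *m M = 0 by rewrite -vM0 c0 scale0r add0r.
rewrite mulmx_free_eq0 // => /eqP ->.
by rewrite c0 raddf0 row_mx0.
Qed.

End RowFreeColMx.

Section Lattices.
Variables (R : realType) (d : nat).
Local Notation intr := (fun k : int => (k%:~R : R)).

Lemma latt_subgroup p (M : 'M[R]_(p, d)) : subgroup_set (latt M).
Proof.
split; first by exists 0; rewrite map_mx0 mul0mx.
by move=> u v [a ->] [b ->]; exists (a - b); rewrite map_mxB mulmxBl.
Qed.

Lemma latt_row p (M : 'M[R]_(p, d)) i : latt M (row i M).
Proof.
exists (delta_mx 0 i); rewrite rowE; congr (_ *m _).
by apply/matrixP => a a'; rewrite !mxE mulrz_nat.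
Qed.

Lemma latt_submx p (M : 'M[R]_(p, d)) u : latt M u -> (u <= M)%MS.
Proof. by move=> [z ->]; apply: submxMl. Qed.

Lemma latt_subset_submx p q (M : 'M[R]_(p, d)) (C : 'M[R]_(q, d)) :
  latt M `<=` latt C -> (M <= C)%MS.
Proof. by move=> MC; apply/row_subP => i; apply/latt_submx/MC/latt_row. Qed.

Lemma latt_col_mx m (b : 'rV[R]_d) (C : 'M[R]_(m, d)) u :
  latt (col_mx b C) u <-> exists q : int, latt C (u - q%:~R *: b).
Proof.
split=> [[z ->]|[q [z zE]]].
  exists (lsubmx z 0 0), (rsubmx z).
  rewrite -{1}(hsubmxK z) map_row_mx mul_row_col {1}[lsubmx z]mx11_scalar.
  by rewrite map_scalar_mx mul_scalar_mx addrAC subrr add0r.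
exists (row_mx q%:M z).
by rewrite map_row_mx mul_row_col map_scalar_mx mul_scalar_mx -zE addrC subrK.
Qed.

Lemma latt_coords p q (M : 'M[R]_(p, d)) (C : 'M[R]_(q, d)) :
  latt M `<=` latt C -> exists Z : 'M[int]_(p, q), M = map_mx intr Z *m C.
Proof.
move=> MC; have /choice[f fE] i : exists z : 'rV[int]_q, row i M = map_mx intr z *m C.
  by have [z ->] := MC _ (latt_row M i); exists z.
exists (\matrix_(i, j) f i 0 j); apply/row_matrixP => i.
by rewrite row_mul fE; congr (_ *m _); apply/rowP => j; rewrite !mxE.
Qed.

Lemma latt_volM p (A : 'M[R]_p) (M : 'M[R]_(p, d)) :
  latt_vol (A *m M) = `|\det A| * latt_vol M.
Proof.
rewrite /latt_vol trmx_mul !mulmxA det_mulmx -mulmxA det_mulmx det_tr.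
by rewrite mulrAC -expr2 sqrtrM ?sqr_ge0 // sqrtr_sqr.
Qed.

Lemma latt_col_mx_subgroup m p (b h : 'rV[R]_d) (C : 'M[R]_(m, d)) (M : 'M[R]_(p, d))
    (H : set 'rV[R]_d) (k : nat) :
  subgroup_set H -> H `<=` latt (col_mx b C) ->
  (forall u (q : int), H u -> latt C (u - q%:~R *: b) -> (k %| q)%Z) ->
  H h -> latt C (h - k%:R *: b) -> H `&` latt C = latt M ->
  H = latt (col_mx h M).
Proof.
move=> sH HbC Hk Hh Ch HM; have sC := latt_subgroup C.
apply/seteqP; split => [u Hu|u /latt_col_mx[c]]; last first.
  rewrite -HM => -[Hr _]; rewrite -(subrK (c%:~R *: h) u).
  by apply: subgroupD Hr _ => //; rewrite scaler_int; apply: subgroupMz.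
have [q Cq] := (latt_col_mx _ _ _).1 (HbC _ Hu).
have /dvdzP[c qE] := Hk _ _ Hu Cq.
apply/latt_col_mx; exists c; rewrite -HM; split.
  by apply: sH.2 => //; rewrite scaler_int; apply: subgroupMz.
have -> : u - c%:~R *: h = (u - q%:~R *: b) - c%:~R *: (h - k%:R *: b).
  by rewrite qE intrM -scalerA scalerBr opprB addrA subrK.
by apply: sC.2 => //; rewrite scaler_int; apply: subgroupMz.
Qed.
Lemma latt_first_coords_subgroup m (b : 'rV[R]_d) (C : 'M[R]_(m, d)) (H : set 'rV[R]_d) :
  subgroup_set H -> subgroup_set [set q : int | exists2 u, H u & latt C (u - q%:~R *: b)].
Proof.
move=> sH; have sC := latt_subgroup C.
split; first by exists 0; [case: sH | rewrite scale0r subr0; case: sC].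
move=> q r [u Hu Cu] [v Hv Cv]; exists (u - v); first exact: sH.2.
have -> : u - v - (q - r)%:~R *: b = (u - q%:~R *: b) - (v - r%:~R *: b).
  by rewrite intrB scalerBl !opprB addrACA [RHS]addrACA [- (q%:~R *: b) + _]addrC.
exact: sC.2.
Qed.

(* Induction on the rank of the ambient lattice: the first coordinates of H form a
   subgroup kZ of Z, and H is spanned by a vector of first coordinate k together with a
   basis of the subgroup of H with first coordinate 0. *)
Lemma subgroup_latt_basis n (Bn : 'M[R]_(n, d)) (H : set 'rV[R]_d) :
  row_free Bn -> subgroup_set H -> H `<=` latt Bn ->
  exists p (M : 'M[R]_(p, d)), row_free M /\ H = latt M.
Proof.
elim: n Bn H => [|n IH] Bn H Bn_free sH HBn.
  exists 0%N, 0; split; first by rewrite -row_leq_rank.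
  apply/seteqP; split=> [u /HBn[z ->]|u [z ->]]; last by rewrite mulmx0; case: sH.
  by exists 0; rewrite (flatmx0 Bn) !mulmx0.
have BnE : Bn = col_mx (usubmx (Bn : 'M[R]_(1 + n, d))) (dsubmx (Bn : 'M[R]_(1 + n, d))).
  by rewrite vsubmxK.
rewrite {}BnE in Bn_free HBn.
set b := usubmx _ in Bn_free HBn; set C := dsubmx _ in Bn_free HBn.
have C_free := row_free_col_mxd Bn_free; have sC := latt_subgroup C.
pose S := [set q : int | exists2 u, H u & latt C (u - q%:~R *: b)].
have sS : subgroup_set S by apply: latt_first_coords_subgroup.
have first_coord u q : H u -> latt C (u - q%:~R *: b) -> S q by exists u.
case: (subgroup_int_dvd sS) => [S0|[k k_gt0 SE]].
  apply: IH C_free sH _ => u Hu; have [q Cq] := (latt_col_mx _ _ _).1 (HBn _ Hu).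
  by move: (first_coord _ _ Hu Cq); rewrite S0 => /= q0; rewrite q0 scale0r subr0 in Cq.
have [h Hh Ch] : S k by rewrite SE /= dvdzz.
have [p [M [M_free HM]]] :=
  IH C (H `&` latt C) C_free (subgroupI sH sC) (fun u => @proj2 _ _).
exists (1 + p)%N, (col_mx h M); split.
  apply: (row_free_col_mx_shear (a := k%:R)) Bn_free M_free _ (latt_submx Ch) _.
    by apply: latt_subset_submx; rewrite -HM => u [].
  by rewrite pnatr_eq0 -lt0n.
apply: latt_col_mx_subgroup sH HBn _ Hh Ch HM => u q Hu Cq.
by move: (first_coord _ _ Hu Cq); rewrite SE.
Qed.

Lemma row_free_leq p (M : 'M[R]_(p, d)) : row_free M -> (p <= d)%N.
Proof. by rewrite -row_leq_rank => /leq_trans; apply; apply: rank_leq_col. Qed.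

Lemma latt_dim_vol_sub (L1 L2 : set 'rV[R]_d) p1 v1 p2 v2 :
  L1 `<=` L2 -> is_latt_dim_vol L1 (p1, v1) -> is_latt_dim_vol L2 (p2, v2) ->
  (p1 <= p2)%N /\ (p1 = p2 -> v2 <= v1).
Proof.
move=> L12 [/= M1 [M1_free L1E ->]] [/= M2 [M2_free L2E ->]].
move: L12; rewrite L1E L2E => /latt_coords[Z M1E].
have rankZ : (p1 <= \rank (map_mx intr Z))%N.
  by move: M1_free; rewrite -row_leq_rank M1E => /leq_trans; apply; apply: mxrankM_maxl.
split=> [|p12]; first exact: leq_trans rankZ (rank_leq_col _).
subst p2; rewrite M1E latt_volM -[leLHS]mul1r ler_wpM2r ?sqrtr_ge0 //.
have detZ : \det (map_mx intr Z) != 0.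
  by rewrite -unitfE -unitmxE -row_free_unit -row_leq_rank.
by move: detZ; rewrite det_map_mx; apply: norm_intr_ge1; apply: intr_int.
Qed.

End Lattices.

Section Translation.
Variables (R : realType) (d : nat).
Implicit Types (A : set 'rV[R]_d) (u v x : 'rV[R]_d).

Lemma translateE u A x : translate u A x <-> A (x - u).
Proof.
split=> [[y Ay <-]|Axu]; first by rewrite addrK.
by exists (x - u); rewrite ?subrK.
Qed.

Lemma translateD u v A : translate u (translate v A) = translate (v + u) A.
Proof.
have E x : x - (v + u) = x - u - v by rewrite opprD addrA addrAC.
apply/seteqP; split=> x.
  by move=> /translateE/translateE Ax; apply/translateE; rewrite E.
by move=> /translateE Ax; apply/translateE/translateE; rewrite -E.
Qed.

Lemma translate0 A : translate 0 A = A.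
Proof.
apply/seteqP; split=> [x /translateE|x Ax]; first by rewrite subr0.
by apply/translateE; rewrite subr0.
Qed.

Lemma translateK u A : translate (- u) (translate u A) = A.
Proof. by rewrite translateD subrr translate0. Qed.

Lemma shift_continuous u : continuous (fun x => x + u).
Proof. by move=> x; apply: continuousD; [|apply: cst_continuous]. Qed.

Lemma translate_connected u A : connected A -> connected (translate u A).
Proof.
move=> A_conn; apply: connected_continuous_connected A_conn _.
exact/continuous_subspaceT/shift_continuous.
Qed.

Lemma translate_open u A : open A -> open (translate u A).
Proof.
have -> : translate u A = (fun x => x - u) @^-1` A.
  by apply/seteqP; split=> x /translateE.
by move/continuousP: (shift_continuous (u := - u)); apply.
Qed.

End Translation.

Section TorusProjection.
Variables (R : realType) (d : nat) (Bm : 'M[R]_d).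
Local Notation phi := (proj_torus Bm).
Local Notation L := (latt Bm).
Implicit Types (P A : set 'rV[R]_d) (u x y : 'rV[R]_d).

Lemma proj_torusP x y : phi x = phi y <-> L (x - y).
Proof. by split=> [/eqmodP/asboolP|Lxy]; last by apply/eqmodP/asboolP. Qed.

Lemma proj_torusD x u : L u -> phi (x + u) = phi x.
Proof. by move=> Lu; apply/proj_torusP; rewrite addrC addKr. Qed.

Lemma proj_torusB x u : L u -> phi (x - u) = phi x.
Proof. by move=> Lu; rewrite -{2}(subrK u x) (proj_torusD _ Lu). Qed.

Lemma proj_torus_surj (q : torus Bm) : exists x, phi x = q.
Proof. by exists (repr q); rewrite /proj_torus reprK. Qed.

Lemma proj_torus_continuous : continuous phi.
Proof. exact: pi_continuous. Qed.

Lemma proj_torus_translate u A : L u -> phi @` translate u A = phi @` A.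
Proof.
move=> Lu; apply/seteqP; split=> q [x + <-].
  by move=> /translateE Axu; exists (x - u); rewrite ?proj_torusB.
by move=> Ax; exists (x + u); [apply/translateE; rewrite addrK | apply: proj_torusD].
Qed.

Lemma proj_torus_open A : open A -> open (phi @` A).
Proof.
move=> A_open; suff : open (phi @^-1` (phi @` A)) by [].
have -> : phi @^-1` (phi @` A) = \bigcup_(u in L) translate u A.
  apply/seteqP; split=> [x [y Ay /proj_torusP Lyx]|x [u Lu /translateE Axu]].
    by exists (x - y); [rewrite -opprB; apply: subgroupN (latt_subgroup _) _ |
      apply/translateE; rewrite opprB addrC subrK].
  by exists (x - u); rewrite ?proj_torusB.
by apply: bigcup_open => u _; apply: translate_open.
Qed.

Definition latt_invariant P := forall x u, L u -> P x -> P (x + u).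

Lemma preimage_latt_invariant (B : set (torus Bm)) : latt_invariant (phi @^-1` B).
Proof. by move=> x u Lu; rewrite /preimage /= proj_torusD. Qed.

Lemma translate_connected_component P x u : latt_invariant P -> L u ->
  translate u (connected_component P x) = connected_component P (x + u).
Proof.
move=> P_inv Lu.
have sub y v : L v -> translate v (connected_component P y) `<=` connected_component P (y + v).
  move=> Lv; have [Py|nPy] := pselect (P y); last first.
    by rewrite connected_component_out // => z [w []].
  apply: connected_component_max.
  - by exists y; [apply: connected_component_refl|].
  - by move=> z [w /connected_component_sub Pw <-]; apply: P_inv.
  - exact/translate_connected/component_connected.
apply/seteqP; split; first exact: sub.
have := sub (x + u) (- u) (subgroupN (latt_subgroup _) Lu); rewrite addrK => sub'.
by move=> z xuz; apply/translateE/sub'/translateE; rewrite opprK subrK.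
Qed.

End TorusProjection.

Definition components_open {T : topologicalType} (P : set T) :=
  forall x, P x -> exists N, [/\ open N, N x & P `&` N `<=` connected_component P x].

(* Near x, the cells avoiding x form a finite union of closed sets; off it, every cell
   through a point of the union contains x. *)
Lemma locally_finite_bigcup_components_open (T : topologicalType) (S : set (set T)) :
  (forall s, S s -> closed s /\ connected s) ->
  (forall x : T, exists2 U, nbhs x U & finite_set [set s | S s /\ s `&` U !=set0]) ->
  components_open (\bigcup_(s in S) s).
Proof.
move=> S_closed S_fin x Yx; have [U Ux U_fin] := S_fin x.
pose far := [set s | (S s /\ s `&` U !=set0) /\ ~ s x].
have far_closed : closed (\bigcup_(s in far) s).
  apply: closed_bigcup; first by apply: sub_finite_set U_fin => s [].
  by move=> s [[/S_closed[]]].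
have : nbhs x (U `&` ~` \bigcup_(s in far) s).
  apply: filterI => //; apply: open_nbhs_nbhs; split; first exact: closed_openC.
  by move=> [s [_ ?]].
rewrite nbhsE => -[N [N_open Nx] NU]; exists N; split => // z [[s Ss sz] Nz].
have [Uz not_far] := NU _ Nz.
have sx : s x.
  by apply: contrapT => nsx; apply: not_far; exists s => //; split => //; split => //; exists z.
apply: connected_component_max sz => //; last by case: (S_closed _ Ss).
by move=> y sy; exists s.
Qed.

Section Cells.
Variable R : realType.

Lemma sqnorm_continuous k : continuous (fun x : 'rV[R]_k => \sum_i x 0 i ^+ 2).
Proof.
apply: continuous_big => [|i _ x]; first exact: add_continuous.
by under eq_fun do rewrite expr2; apply: continuousM; apply: coord_continuous.
Qed.

Lemma enorm_continuous k : continuous (@enorm R k).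
Proof. by move=> x; apply: continuous_comp (@sqnorm_continuous k x) (@sqrt_continuous _ _). Qed.

Lemma enormZ k (t : R) (x : 'rV[R]_k) : enorm (t *: x) = `|t| * enorm x.
Proof.
rewrite /enorm -sqrtr_sqr -sqrtrM ?sqr_ge0 // mulr_sumr.
by congr Num.sqrt; apply: eq_bigr => i _; rewrite mxE exprMn.
Qed.

Lemma coord_le_enorm k (x : 'rV[R]_k) i : `|x 0 i| <= enorm x.
Proof.
rewrite /enorm -sqrtr_sqr ler_sqrt ?sumr_ge0 // => [|j _]; last exact: sqr_ge0.
by rewrite (bigD1 i) //= lerDl sumr_ge0 // => j _; apply: sqr_ge0.
Qed.

Lemma cball_compact k : compact (@cball R k).
Proof.
apply: bounded_closed_compact.
  exists 1; split => // M M_gt1 x x_in /=; have -> : `|x| = mx_norm x by [].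
  rewrite mx_normrE; apply: bigmax_le => [|[i j] _ /=]; first exact: ltW (lt_trans ltr01 M_gt1).
  by rewrite (ord1 i); apply: le_trans (coord_le_enorm _ _) (le_trans x_in (ltW M_gt1)).
have -> : @cball R k = @enorm R k @^-1` [set r | r <= 1] by [].
by move/continuous_closedP: (@enorm_continuous k); apply; apply: closed_le.
Qed.

Lemma cball_connected k : connected (@cball R k).
Proof.
have -> : @cball R k = \bigcup_(x in @cball R k) ((fun t : R => t *: x) @` `[0, 1]%classic).
  apply/seteqP; split => [x x_in|x [y y_in [t]]].
    by exists x => //; exists 1; rewrite ?scale1r // /= in_itv /= lexx ler01.
  rewrite /= in_itv /= => /andP[t_ge0 t_le1] <-; rewrite /cball /= enormZ ger0_norm //.
  by rewrite -[leRHS]mul1r; apply: ler_pM => //; apply: sqrtr_ge0.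
apply: bigcup_connected => [|x _].
  by exists 0 => x _; exists 0; rewrite ?scale0r // /= in_itv /= lexx ler01.
apply: connected_continuous_connected; first exact/connected_intervalP/interval_is_interval.
exact/continuous_subspaceT/scalel_continuous.
Qed.

Lemma cell_closed_connected d (K : set (set 'rV[R]_d)) sigma :
  cell_complex K -> K sigma -> closed sigma /\ connected sigma.
Proof.
move=> [K_cells _ _] /K_cells[k [f [[g [f_cont _ <- _ _] _]]]]; split.
  apply: compact_closed; first exact: norm_hausdorff.
  exact: continuous_compact f_cont (@cball_compact k).
exact: connected_continuous_connected (@cball_connected k) f_cont.
Qed.

End Cells.

Section Sublevel.
Variables (R : realType) (d : nat) (Bm : 'M[R]_d).
Variables (K : set (set 'rV[R]_d)) (F : set 'rV[R]_d -> R).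
Local Notation phi := (proj_torus Bm).
Local Notation sublevel t := (\bigcup_(sigma in [set sigma | K sigma /\ F sigma <= t]) sigma).

Lemma preimage_torus_sublevel t : periodic_complex Bm K -> periodic_filter Bm K F ->
  phi @^-1` torus_sublevel Bm K F t = sublevel t.
Proof.
move=> K_per F_per; apply/seteqP; split => [x [y [s [Ks Fs] sy] /proj_torusP Lyx]|x Yx].
  have Lxy : latt Bm (x - y) by rewrite -opprB; apply: subgroupN (latt_subgroup _) Lyx.
  exists (translate (x - y) s); first by split; [apply: K_per | rewrite F_per].
  by apply/translateE; rewrite opprB addrC subrK.
by exists x.
Qed.

Lemma sublevel_components_open t : cell_complex K -> components_open (sublevel t).
Proof.
move=> K_cc; apply: locally_finite_bigcup_components_open => [s [Ks _]|x].
  exact: cell_closed_connected K_cc Ks.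
case: K_cc => _ _ /(_ x) [U Ux U_fin]; exists U => //.
by apply: sub_finite_set U_fin => s [[]].
Qed.

End Sublevel.

Section Shadows.
Variables (R : realType) (d : nat) (Bm : 'M[R]_d).
Local Notation phi := (proj_torus Bm).

Lemma component_preimage_components_open (X B : set (torus Bm)) :
  components_open (phi @^-1` X) -> is_component X B -> components_open (phi @^-1` B).
Proof.
move=> X_open [b Xb ->] x Bx; have Xx := connected_component_sub Bx.
have [N [N_open Nx NX]] := X_open x Xx; exists N; split => //.
have YB : connected_component (phi @^-1` X) x `<=` phi @^-1` connected_component X b.
  move=> z xz; rewrite /preimage /= (same_connected_component Bx).
  suff : phi @` connected_component (phi @^-1` X) x `<=` connected_component X (phi x).
    by apply; exists z.
  apply: connected_component_max.
  - by exists x => //; apply: connected_component_refl.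
  - by move=> _ [w /connected_component_sub Xw <-].
  - apply: connected_continuous_connected; first exact: component_connected.
    exact/continuous_subspaceT/proj_torus_continuous.
move=> z [Bz Nz]; apply: connected_component_max YB _ _ _.
- by apply: connected_component_refl.
- exact: component_connected.
- by apply: NX; split => //; apply: connected_component_sub Bz.
Qed.

Variable B : set (torus Bm).
Local Notation P := (phi @^-1` B).

Lemma connected_component_proj_eq a b : phi a = phi b ->
  connected_component P a = translate (a - b) (connected_component P b).
Proof.
move=> /proj_torusP Lab.
by rewrite (translate_connected_component _ (preimage_latt_invariant (B := B)) Lab) addrC subrK.
Qed.

Lemma proj_component_meet x y q : (phi @` connected_component P x) q ->
  (phi @` connected_component P y) q ->
  phi @` connected_component P x = phi @` connected_component P y.
Proof.
move=> [a xa <-] [b yb ab]; have /proj_torusP Lab := esym ab.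
rewrite (same_connected_component xa) (same_connected_component yb).
by rewrite (connected_component_proj_eq (esym ab)) proj_torus_translate.
Qed.

Hypothesis P_open : components_open P.

Lemma proj_component_rel_open y :
  exists2 V, open V & phi @` connected_component P y = B `&` V.
Proof.
pose U := \bigcup_(N in [set N | open N /\ P `&` N `<=` connected_component P y]) N.
exists (phi @` U); first by apply/proj_torus_open/bigcup_open => N [].
apply/seteqP; split => [_ [g yg <-]|q [Bq [w [N [_ N_y] Nw] wq]]]; last first.
  by exists w => //; apply: N_y; split; rewrite // /preimage /= wq.
have Pg := connected_component_sub yg; split => //.
have [N [N_open Ng N_g]] := P_open Pg.
by exists g => //; exists N => //; rewrite (same_connected_component yg).
Qed.

Hypothesis B_conn : connected B.

(* The images of the components of P partition B into relatively open sets. *)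
Lemma proj_component_full y : P y -> phi @` connected_component P y = B.
Proof.
move=> Py; set S := phi @` _; apply: B_conn.
- by exists (phi y), y => //; apply: connected_component_refl.
- exact: proj_component_rel_open.
pose others := [set V | open V /\ exists2 x, P x & ~ S (phi x) /\
  phi @` connected_component P x = B `&` V].
exists (~` \bigcup_(V in others) V).
  by apply/open_closedC/bigcup_open => V [].
apply/seteqP; split => [_ [g yg <-]|q [Bq not_other]].
  split; first exact: connected_component_sub yg.
  move=> [V [_ [x Px [Sx xV]]] Vg]; apply: Sx.
  have xg : (phi @` connected_component P x) (phi g).
    by rewrite xV; split => //; exact: connected_component_sub yg.
  rewrite /S -(proj_component_meet xg (imageP phi yg)).
  by exists x => //; apply: connected_component_refl.
apply: contrapT => Sq; have [x xq] := proj_torus_surj q.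
have Px : P x by rewrite /preimage /= xq.
have [V V_open xV] := proj_component_rel_open x.
have [_ Vx] : (B `&` V) (phi x).
  by rewrite -xV; exists x => //; apply: connected_component_refl.
by apply: not_other; exists V; rewrite -?xq //; split => //; exists x; rewrite ?xq.
Qed.

Lemma shadows_translate x y : P x -> P y ->
  exists2 w, latt Bm w & connected_component P x = translate w (connected_component P y).
Proof.
move=> Px Py; have := proj_component_full Py; move/seteqP => [_ /(_ _ Px)] [g yg gx].
exists (x - g); first by apply/proj_torusP.
by rewrite (connected_component_proj_eq (esym gx)) (same_connected_component yg).
Qed.

End Shadows.

Section Frequency.
Variables (R : realType) (d : nat) (Bm : 'M[R]_d).
Local Notation phi := (proj_torus Bm).
Local Notation shadow G := (xget set0 (is_shadow G)).

Lemma period_latt_subgroup g : subgroup_set (period_latt Bm g).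
Proof.
have [L0 LB] := latt_subgroup Bm.
split=> [|u v [Lu ug] [Lv vg]]; first by split; rewrite ?translate0.
by split; [exact: LB | rewrite -translateD ug -{1}vg translateK].
Qed.

Lemma period_latt_dim_vol g : row_free Bm ->
  is_latt_dim_vol (period_latt Bm g) (latt_dim_vol (period_latt Bm g)).
Proof.
move=> Bm_free; apply: xgetPex.
have [p [M [M_free ->]]] :=
  subgroup_latt_basis Bm_free (period_latt_subgroup g) (fun u => @proj1 _ _).
by exists (p, latt_vol M), M.
Qed.

Lemma period_latt_translate w g : latt Bm w ->
  period_latt Bm (translate w g) = period_latt Bm g.
Proof.
move=> Lw; apply/seteqP; split=> u [Lu ug]; split => //.
  by apply: (can_inj (translateK w)); rewrite -ug translateD addrC -translateD.
by rewrite translateD addrC -translateD ug.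
Qed.

Lemma period_latt_component P x g : latt_invariant Bm P ->
  connected g -> g x -> g `<=` P ->
  period_latt Bm g `<=` period_latt Bm (connected_component P x).
Proof.
move=> P_inv g_conn gx gP u [Lu ug]; split => //.
rewrite (translate_connected_component _ P_inv Lu); apply/esym/same_connected_component.
apply: (connected_component_max gx gP g_conn).
by rewrite -ug; apply/translateE; rewrite addrK.
Qed.

Lemma shadow_component (S G : set (torus Bm)) : is_component S G ->
  exists2 x, G (phi x) & shadow G = connected_component (phi @^-1` G) x.
Proof.
move=> [g Sg GE]; have [x xg] := proj_torus_surj g.
have Gx : G (phi x) by rewrite xg GE; apply: connected_component_refl.
have [y Gy ->] : is_shadow G (shadow G).
  by apply: xgetPex; exists (connected_component (phi @^-1` G) x), x.
by exists y.
Qed.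

Lemma nu_ge0 q : 0 <= nu R q.
Proof.
elim/ltn_ind: q => -[|[|q]] IH /=; [exact: ler01 | exact: ler0n |].
by rewrite mulr_ge0 ?IH // divr_ge0 ?mulr_ge0 ?pi_ge0.
Qed.

Lemma freq_le (GA GB : set (torus Bm)) : row_free Bm ->
  period_latt Bm (shadow GA) `<=` period_latt Bm (shadow GB) -> mono_le (freq GB) (freq GA).
Proof.
move=> Bm_free AB; rewrite /freq /mono_le /=.
have [pA_le pA_eq] := latt_dim_vol_sub AB
  (period_latt_dim_vol (shadow GA) Bm_free) (period_latt_dim_vol (shadow GB) Bm_free).
set pvA := latt_dim_vol _ in pA_le pA_eq *; set pvB := latt_dim_vol _ in pA_le pA_eq *.
have pB_le : (pvB.1 <= d)%N.
  by have [M [/row_free_leq]] := period_latt_dim_vol (shadow GB) Bm_free.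
have [pA_lt|pA_gt|pAB] := ltngtP pvA.1 pvB.1; first by left; lia.
  by move: pA_le; rewrite leqNgt pA_gt.
right; split; first by rewrite pAB.
by rewrite pAB ler_wpM2r ?nu_ge0 // ler_wpM2r ?invr_ge0 ?sqrtr_ge0 // pA_eq.
Qed.

End Frequency.

Unset Implicit Arguments.

Theorem mainTheorem7 (R : realType) (d : nat) (Bm : 'M[R]_d)
    (K : set (set 'rV[R]_d)) (F : set 'rV[R]_d -> R) :
  row_free Bm ->
  cell_complex K -> periodic_complex Bm K ->
  is_filter K F -> periodic_filter Bm K F ->
  forall (s t : R) (A B : set (torus Bm)),
    is_component (torus_sublevel Bm K F s) A ->
    is_component (torus_sublevel Bm K F t) B ->
    s <= t -> A `<=` B ->
    mono_le (freq B) (freq A).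
Proof.
move=> Bm_free K_cc K_per _ F_per s t A B A_comp B_comp _ AB.
apply: freq_le Bm_free _.
have [xA AxA ->] := shadow_component A_comp.
have [yB ByB ->] := shadow_component B_comp.
have B_open : components_open (proj_torus Bm @^-1` B).
  apply: component_preimage_components_open B_comp.
  by rewrite preimage_torus_sublevel //; apply: sublevel_components_open.
have B_conn : connected B by case: B_comp => b _ ->; apply: component_connected.
have [w Lw xy_shadows] := shadows_translate B_open B_conn (AB _ AxA) ByB.
rewrite -(period_latt_translate (connected_component _ yB) Lw) -xy_shadows.
apply: period_latt_component (preimage_latt_invariant (B := B)) _ _ _.
- exact: component_connected.
- exact: connected_component_refl.
- by move=> x /connected_component_sub /AB.
Qed.
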